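(* In the construction below, for every directed path $\langle(u_0,0),(u_1,1),\dots,(u_K,K)\rangle$ in $\mathcal D$ from the root to level $K$, $$\sum_{k=0}^{K-1}\log\big(1/\theta_{(u_k,k)(u_{k+1},k+1)}\big)\le 3\log n.$$ In particular $\Delta_I(\hat{\mathcal D})\le3\log n$.
   Context: Construction. Let $(X,d)$ be a metric space with $n=|X|\ge2$ and $\mathrm{diam}(X)=1$. For $S\subseteq X$, $r\ge0$: $B_X(S,r):=\{x\in X:\exists s\in S,\ d(x,s)\le r\}$ and $B_X(x,r):=B_X(\{x\},r)$. Let $\varepsilon_0:=\min\{d(x,y):x\ne y\}$, $\tau:=12$, $K:=1+\lceil\log_\tau(1/\varepsilon_0)\rceil$. For $\eta>0$ the greedy $\eta$-net is built as: $N_0=\emptyset$; for $j\ge1$, $S_j:=X\setminus B_X(N_{j-1},\eta)$; if $S_j=\emptyset$ output $N_{j-1}$; else pick $x_j\in S_j$ maximizing $|B_X(x,\eta/3)|$ and set $N_j=N_{j-1}\cup\{x_j\}$. For $k=0,\dots,K$ let $U_k$ be the greedy $\tau^{-k}$-net (so $U_0$ is a single point and $U_K=X$). For $k<K$, $A_k$ is the set of pairs $(u,u')\in U_k\times U_{k+1}$ with (i) $d(u,u')\le4\tau^{-k}$ and (ii) $|B_X(u,\tau^{-k}/3)|\ge\max\{|B_X(w,\tau^{-k}/3)|:w\in B_X(u',6\tau^{-(k+1)})\}$. The directed graph $\mathcal D$ has vertex set $\{(u,k):u\in U_k,\ 0\le k\le K\}$, arcs $((u,k),(u',k+1))$ for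 $(u,u')\in A_k$, root $(u,0)$ with $U_0=\{u\}$, and the vertices $(x,K)$ are identified with $x\in X$. Arc weights: $\omega_{(u,k)(u',k+1)}:=10\tau^{-k}$ and $\theta_{(u,k)(u',k+1)}:=|B_X(u',\tau^{-(k+1)}/3)|\big/\sum_{w:(u,w)\in A_k}|B_X(w,\tau^{-(k+1)}/3)|$. $\hat{\mathcal D}=(\mathcal D,\omega,\theta)$; $\Delta_I(\hat{\mathcal D})$ is the maximum over root-to-level-$K$ paths $\gamma$ of $\log(1/\prod_{a\in\gamma}\theta_a)$. *)

From HB Require Import structures.
From mathcomp Require Import all_boot all_order all_algebra.
From mathcomp Require Import reals exp.
Set Implicit Arguments. Unset Strict Implicit. Unset Printing Implicit Defensive.
Import Order.TTheory GRing.Theory Num.Theory.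
Local Open Scope ring_scope.

Section Defs.
Variables (R : realType) (T : finType) (d : T -> T -> R).

Definition is_metric : Prop :=
  [/\ (forall x y, 0 <= d x y),
      (forall x y, d x y = 0 <-> x = y),
      (forall x y, d x y = d y x) &
      (forall x y z, d x z <= d x y + d y z)].

Definition cball (x : T) (r : R) : {set T} := [set y | d x y <= r].

Definition cballS (S : seq T) (r : R) : {set T} :=
  [set y | has (fun s => d s y <= r) S].

(* N = [:: x_1; ...; x_m] is an output of the greedy eta-net procedure,
   for SOME tie-breaking choice at each step:
   each x_j lies outside B(N_{j-1}, eta) and maximizes |B(x, eta/3)| among
   the points outside B(N_{j-1}, eta); the procedure stops when
   B(N, eta) = X. *)
Definition greedy_net (eta : R) (N : seq T) : Prop :=
  (forall N1 x N2, N = N1 ++ x :: N2 ->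
     x \notin cballS N1 eta /\
     (forall y, y \notin cballS N1 eta ->
        (#|cball y (eta / 3)| <= #|cball x (eta / 3)|)%N)) /\
  [set: T] \subset cballS N eta.

Definition tau : R := 12%:R.
Definition lev (k : nat) : R := tau ^- k.

Definition arcA (U : nat -> seq T) (k : nat) (u u' : T) : bool :=
  [&& u \in U k, u' \in U k.+1, d u u' <= 4 * lev k &
      [forall w, (w \in cball u' (6 * lev k.+1)) ==>
         (#|cball w (lev k / 3)| <= #|cball u (lev k / 3)|)%N]].

Definition theta (U : nat -> seq T) (k : nat) (u u' : T) : R :=
  (#|cball u' (lev k.+1 / 3)|)%:R /
  (\sum_(w | arcA U k u w) #|cball w (lev k.+1 / 3)|)%:R.

End Defs.

(* K = 1 + ceil(log_tau(1/eps0)) (nonnegative since eps0 <= diam = 1) *)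
Definition Kdepth (R : realType) (eps0 : R) : nat :=
  (1 + `|Num.ceil (ln (eps0^-1) / ln (tau R))|)%N.

From HB Require Import structures.
From mathcomp Require Import all_boot all_order all_algebra.
From mathcomp Require Import reals exp lra.
Set Implicit Arguments. Unset Strict Implicit. Unset Printing Implicit Defensive.
Import Order.TTheory GRing.Theory Num.Theory.
Local Open Scope ring_scope.

(* Write [g_j = |B(u_j, tau^-j/3)|] and [M_k] for the denominator of [theta]
   at [u_k], so that [log (1/theta_k) = log M_k - log g_(k+1)]. Balls of radius
   [eta/3] around the points of a greedy [eta]-net are pairwise disjoint, hence
   [M_k <= n]. The children of [u_(k+2)] lie within [4 tau^-(k+2)] of it, so
   their balls are disjoint subsets of [B(u_(k+2), tau^-k/3)], and condition
   (ii) on the arc [(u_k, u_(k+1))] bounds that ball by [g_k]: [M_(k+2) <= g_k].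
   The sum then telescopes with step three up to three terms [log n]. *)

Lemma leq_sum_card_disjoint (T : finType) (P : pred T) (B : T -> {set T})
    (S : {set T}) :
  (forall w y, P w -> y \in B w -> y \in S) ->
  (forall w w' y, P w -> P w' -> y \in B w -> y \in B w' -> w = w') ->
  (\sum_(w | P w) #|B w| <= #|S|)%N.
Proof.
move=> subS disjB.
under eq_bigr => w _ do rewrite -sum1_card big_mkcond /=.
rewrite exchange_big /= -sum1_card big_mkcond [X in (_ <= X)%N]big_mkcond /=.
apply: leq_sum => y _.
case: (pickP (fun w => P w && (y \in B w))) => [w0 /andP[Pw0 yw0] | noB].
  rewrite (bigD1 w0) //= yw0 (subS w0 y Pw0 yw0) big1 // => w /andP[Pw ne].
  by case: ifP => // yw; move: ne; rewrite (disjB w w0 y) ?eqxx.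
by rewrite big1 // => w Pw; case: ifP => // yw; move: (noB w); rewrite Pw yw.
Qed.

Lemma sum_sub_shift_le (R : realDomainType) (a b : nat -> R) (L : R) (K : nat) :
  (forall k, 0 <= b k <= L) ->
  (forall k, (k < K)%N -> a k <= L) ->
  (forall k, (k.+2 < K)%N -> a k.+2 <= b k) ->
  \sum_(k < K) (a k - b k.+1) <= 3 * L.
Proof.
move=> b_bnd a_le_L a_le_b.
(* [b] shifted by two and padded with [L], so that [a k <= c k] and
   [b k.+1 = c k.+3]. *)
pose c i := if (i < 2)%N then L else b (i - 2)%N.
have c_bnd i : 0 <= c i <= L.
  by rewrite /c; case: ifP => _ //; have /andP[] := b_bnd 0%N => ? ?; lra.
have telescope n : \sum_(k < n) (c k - c k.+3)
    = c 0%N + c 1%N + c 2%N - c n - c n.+1 - c n.+2.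
  by elim: n => [|n IH]; rewrite ?big_ord0 ?big_ord_recr /= ?IH; lra.
apply: (@le_trans _ _ (\sum_(k < K) (c k - c k.+3))).
  apply: ler_sum => -[k kK] _ /=; rewrite lerD2r /c /= subn2 /=.
  case: ifP => k2; first exact: a_le_L.
  by case: k k2 kK => [|[|k]] // _; apply: a_le_b.
rewrite telescope.
have := c_bnd 0%N; have := c_bnd 1%N; have := c_bnd 2%N.
have := c_bnd K; have := c_bnd K.+1; have := c_bnd K.+2.
move=> /andP[? ?] /andP[? ?] /andP[? ?] /andP[? ?] /andP[? ?] /andP[? ?]; lra.
Qed.

Lemma ln_inv_ratio_nat (R : realType) (m n : nat) : (0 < m)%N -> (0 < n)%N ->
  ln ((m%:R / n%:R)^-1 : R) = ln n%:R - ln m%:R.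
Proof.
move=> m_gt0 n_gt0.
have m_pos : (m%:R : R) \is Num.pos by rewrite posrE ltr0n.
have n_pos : (n%:R : R) \is Num.pos by rewrite posrE ltr0n.
have mV_pos : (m%:R : R)^-1 \is Num.pos by rewrite posrE invr_gt0 -posrE.
by rewrite invf_div (lnM n_pos mV_pos) (lnV m_pos).
Qed.

Lemma ln_le_nat (R : realType) (m n : nat) : (0 < m)%N -> (m <= n)%N ->
  ln (m%:R : R) <= ln n%:R.
Proof.
move=> m_gt0 mn; rewrite ler_ln ?ler_nat // posrE ltr0n //.
exact: leq_trans mn.
Qed.

Lemma levS (R : realType) k : lev R k.+1 = lev R k / 12%:R.
Proof. by rewrite /lev /tau exprS invfM mulrC. Qed.

Lemma lev_gt0 (R : realType) k : 0 < lev R k.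
Proof. by rewrite /lev invr_gt0 exprn_gt0 // /tau ltr0n. Qed.

Section GreedyNets.
Variables (R : realType) (T : finType) (d : T -> T -> R).
Hypothesis d_metric : is_metric d.

Lemma cball_card_gt0 x r : 0 <= r -> (0 < #|cball d x r|)%N.
Proof.
have [_ d0 _ _] := d_metric.
by move=> r_ge0; apply/card_gt0P; exists x; rewrite inE (proj2 (d0 x x)).
Qed.

Lemma greedy_net_sep eta N w w' : greedy_net d eta N ->
  w \in N -> w' \in N -> w != w' -> eta < d w w'.
Proof.
have [_ _ dC _] := d_metric; move=> [greedy _].
have far_from_prefix a b p1 p2 : N = p1 ++ b :: p2 -> a \in p1 -> eta < d a b.
  move=> Np ap1; have [b_out _] := greedy _ _ _ Np.
  by move: b_out; rewrite inE => /hasPn /(_ a ap1); rewrite ltNge.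
move=> wN w'N ww'; case/splitPr Np: {1}N / w'N => [p1 p2].
move: wN; rewrite Np mem_cat in_cons (negbTE ww') /= => /orP[wp1 | wp2].
  exact: (far_from_prefix w w' p1 p2).
case/splitPr p2q: {1}p2 / wp2 => [q1 q2]; rewrite dC.
apply: (far_from_prefix w' w (p1 ++ w' :: q1) q2); first by rewrite Np p2q -catA.
by rewrite mem_cat in_cons eqxx orbT.
Qed.

Lemma greedy_net_cball_inj eta N w w' y : greedy_net d eta N ->
  w \in N -> w' \in N ->
  y \in cball d w (eta / 3) -> y \in cball d w' (eta / 3) -> w = w'.
Proof.
have [d_ge0 _ dC dtri] := d_metric.
move=> net wN w'N; rewrite !inE => wy w'y; apply/eqP/negPn/negP => ww'.
have := greedy_net_sep net wN w'N ww'; have := d_ge0 w y.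
have := dtri w y w'; rewrite (dC y w'); lra.
Qed.

Variable U : nat -> seq T.

Definition child_mass (k : nat) (v : T) : nat :=
  \sum_(w | arcA d U k v w) #|cball d w (lev R k.+1 / 3)|.

Lemma leq_card_child_mass k v w : arcA d U k v w ->
  (#|cball d w (lev R k.+1 / 3)| <= child_mass k v)%N.
Proof. by move=> vw; rewrite /child_mass (bigD1 w) //= leq_addr. Qed.

Lemma child_balls_inj k v w w' y :
  greedy_net d (lev R k.+1) (U k.+1) -> arcA d U k v w -> arcA d U k v w' ->
  y \in cball d w (lev R k.+1 / 3) -> y \in cball d w' (lev R k.+1 / 3) ->
  w = w'.
Proof.
move=> net /and4P[_ wU _ _] /and4P[_ w'U _ _].
exact: greedy_net_cball_inj net wU w'U.
Qed.

Lemma child_mass_le_card k v : greedy_net d (lev R k.+1) (U k.+1) ->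
  (child_mass k v <= #|T|)%N.
Proof.
move=> net; rewrite -cardsT; apply: leq_sum_card_disjoint => // w w' y.
exact: child_balls_inj.
Qed.

Lemma child_mass_le_cball k v : greedy_net d (lev R k.+3) (U k.+3) ->
  (child_mass k.+2 v <= #|cball d v (lev R k / 3)|)%N.
Proof.
have [_ _ _ dtri] := d_metric.
move=> net; apply: leq_sum_card_disjoint; last first.
  by move=> w w' y; exact: child_balls_inj.
move=> w y /and4P[_ _ vw _]; rewrite !inE => wy.
have := dtri v w y; move: vw wy; rewrite !levS; have := lev_gt0 R k; lra.
Qed.

Lemma arcA_cball_card_le k v0 v1 v2 :
  arcA d U k v0 v1 -> arcA d U k.+1 v1 v2 ->
  (#|cball d v2 (lev R k / 3)| <= #|cball d v0 (lev R k / 3)|)%N.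
Proof.
move=> /and4P[_ _ _ /forallP /(_ v2) /implyP heavier] /and4P[_ _ v12 _].
apply: heavier; rewrite inE; have := lev_gt0 R k.+1; lra.
Qed.

End GreedyNets.

Theorem lemma3p5 (R : realType) (T : finType) (d : T -> T -> R) (eps0 : R)
    (U : nat -> seq T) (u : nat -> T) :
  is_metric d ->
  (2 <= #|T|)%N ->
  (* diam(X) = 1 *)
  (forall x y, d x y <= 1) -> (exists x y, d x y = 1) ->
  (* eps0 = min distance between distinct points *)
  (forall x y, x != y -> eps0 <= d x y) ->
  (exists x y, x != y /\ d x y = eps0) ->
  (* U k is a greedy tau^{-k}-net, k = 0..K *)
  (forall k, (k <= Kdepth eps0)%N -> greedy_net d (lev R k) (U k)) ->
  (* <(u 0,0),...,(u K,K)> is a directed path in D from the root *)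
  (forall k, (k < Kdepth eps0)%N -> arcA d U k (u k) (u k.+1)) ->
  \sum_(k < Kdepth eps0) ln ((theta d U k (u k) (u k.+1))^-1)
    <= 3 * ln (#|T|%:R : R).
Proof.
move=> d_metric _ _ _ _ _ net path; set K := Kdepth eps0.
pose g j := #|cball d (u j) (lev R j / 3)|.
have g_gt0 j : (0 < g j)%N.
  by apply: cball_card_gt0 => //; rewrite divr_ge0 ?ltW ?lev_gt0.
have mass_gt0 k : (k < K)%N -> (0 < child_mass d U k (u k))%N.
  by move=> kK; apply: leq_trans (g_gt0 k.+1) (leq_card_child_mass (path k kK)).
rewrite (eq_bigr (fun k : 'I_K =>
    ln (child_mass d U k (u k))%:R - ln (g k.+1)%:R)); last first.
  by move=> -[k kK] _; rewrite -ln_inv_ratio_nat ?mass_gt0.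
apply: (sum_sub_shift_le (a := fun k => ln (child_mass d U k (u k))%:R)
                         (b := fun j => ln (g j)%:R)) => [j | k kK | k kK].
- by rewrite ln_ge0 ?ler1n ?ln_le_nat ?max_card.
- apply: ln_le_nat; first exact: mass_gt0.
  by apply: child_mass_le_card => //; exact: net.
- apply: ln_le_nat; first exact: mass_gt0.
  apply: leq_trans (child_mass_le_cball d_metric (u k.+2) (net k.+3 kK)) _.
  rewrite /g; apply: arcA_cball_card_le; apply: path.
  + exact: ltnW (ltnW kK).
  + exact: ltnW kK.
Qed.
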